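(* Let $\mathcal{A}$ be an abelian normed algebra, $n\in\mathbb{N}$ and $x_1,\dots,x_n\in\mathcal{A}$. Then the product $x_1x_2\cdots x_n$ is boundedly approximately invertible in $\mathcal{A}$ if and only if each $x_k$, $k=1,\dots,n$, is boundedly approximately invertible in $\mathcal{A}$.
   Context: An approximate identity in $\mathcal{A}$ is a net $(e_j)_{j\in J}$ with $\lim_j e_jy=\lim_j ye_j=y$ for all $y\in\mathcal{A}$; it is norm bounded if $\sup_j\|e_j\|<\infty$. In an abelian normed algebra, $x\in\mathcal{A}$ is boundedly approximately invertible if there is a net $(r_j)_{j\in J}$ in $\mathcal{A}$ such that $(xr_j)_{j\in J}$ is a norm bounded approximate identity in $\mathcal{A}$. *)

From HB Require Import structures.
From mathcomp Require Import all_boot all_order all_algebra.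
From mathcomp Require Import all_classical all_reals.
From mathcomp Require Import topology normedtype.
Set Implicit Arguments. Unset Strict Implicit. Unset Printing Implicit Defensive.
Import Order.TTheory GRing.Theory Num.Theory.
Import numFieldNormedType.Exports.
Local Open Scope ring_scope.

Record abelian_normed_algebra (K : numFieldType) (A : normedModType K)
    (mul : A -> A -> A) : Prop := {
  mulA_ : forall x y z, mul x (mul y z) = mul (mul x y) z;
  mulC_ : forall x y, mul x y = mul y x;
  mulDl_ : forall x y z, mul (x + y) z = mul x z + mul y z;
  mulZl_ : forall (a : K) x y, mul (a *: x) y = a *: mul x y;
  normM_ : forall x y, `|mul x y| <= `|x| * `|y|
}.

Record directed (J : Type) (le : J -> J -> Prop) : Prop := {
  dir_nonempty : inhabited J;
  dir_refl : forall j, le j j;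
  dir_trans : forall i j k, le i j -> le j k -> le i k;
  dir_ub : forall i j, exists k, le i k /\ le j k
}.

Definition net_lim (K : numFieldType) (A : normedModType K) (J : Type)
    (le : J -> J -> Prop) (f : J -> A) (y : A) : Prop :=
  forall eps : K, 0 < eps -> exists j0, forall j, le j0 j -> `|f j - y| < eps.

Definition approx_identity (K : numFieldType) (A : normedModType K)
    (mul : A -> A -> A) (J : Type) (le : J -> J -> Prop) (e : J -> A) : Prop :=
  forall y : A, net_lim le (fun j => mul (e j) y) y /\
                net_lim le (fun j => mul y (e j)) y.

Definition norm_bounded (K : numFieldType) (A : normedModType K) (J : Type)
    (e : J -> A) : Prop :=
  exists M : K, forall j, `|e j| <= M.

Definition bdd_approx_invertible (K : numFieldType) (A : normedModType K)
    (mul : A -> A -> A) (x : A) : Prop :=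
  exists (J : Type) (le : J -> J -> Prop) (r : J -> A),
    directed le /\
    approx_identity mul le (fun j => mul x (r j)) /\
    norm_bounded (fun j => mul x (r j)).

(* The product x_0 x_1 ... x_n (n+1 factors). *)
Fixpoint prod_upto (A : Type) (mul : A -> A -> A) (x : nat -> A) (n : nat) : A :=
  match n with
  | 0 => x 0
  | m.+1 => mul (prod_upto mul x m) (x m.+1)
  end.

From mathcomp Require Import all_boot all_order all_algebra.
From mathcomp Require Import all_classical all_reals.
From mathcomp Require Import topology normedtype.
Import Order.TTheory GRing.Theory Num.Theory.
Import numFieldNormedType.Exports.
Local Open Scope ring_scope.

(* In an abelian normed algebra, bounded approximate invertibility is
   compatible with products in both directions:
   - if x y is boundedly approximately invertible via (r_j), then x is so
     via (y r_j), since x (y r_j) = (x y) r_j; by commutativity so is y;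
   - if (x r_i) and (y s_j) are bounded approximate identities indexed by
     directed sets I and J, then (x y)(r_i s_j) = (x r_i)(y s_j) is one
     indexed by the product directed set I * J.  The key estimate is
       |e_i f_j z - z| <= |e_i| |f_j z - z| + |e_i z - z|,
     where the boundedness of (e_i) controls the first term. *)

Definition prod_le {I J : Type} (leI : I -> I -> Prop) (leJ : J -> J -> Prop)
    (p q : I * J) : Prop :=
  leI p.1 q.1 /\ leJ p.2 q.2.

Lemma directed_prod (I J : Type) (leI : I -> I -> Prop) (leJ : J -> J -> Prop) :
  directed leI -> directed leJ -> directed (prod_le leI leJ).
Proof.
move=> dI dJ; have [i0] := dir_nonempty dI; have [j0] := dir_nonempty dJ.
split.
- exact: inhabits (i0, j0).
- by move=> p; split; [exact: dir_refl dI _ | exact: dir_refl dJ _].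
- move=> p q s [hpqI hpqJ] [hqsI hqsJ]; split.
  + exact: dir_trans dI _ _ _ hpqI hqsI.
  + exact: dir_trans dJ _ _ _ hpqJ hqsJ.
- move=> p q.
  have [i [hpi hqi]] := dir_ub dI p.1 q.1.
  have [j [hpj hqj]] := dir_ub dJ p.2 q.2.
  by exists (i, j).
Qed.

Section AbelianNormedAlgebra.
Context {K : numFieldType} {A : normedModType K} {mul : A -> A -> A}.
Hypothesis hA : abelian_normed_algebra mul.

Lemma mulBr (e u v : A) : mul e (u - v) = mul e u - mul e v.
Proof.
have mul0l w : mul 0 w = 0.
  by apply: (addrI (mul 0 w)); rewrite -(mulDl_ hA) !addr0.
have mulNl a w : mul (- a) w = - mul a w.
  by apply/eqP; rewrite -subr_eq0 opprK -(mulDl_ hA) addNr mul0l.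
by rewrite (mulC_ hA) (mulDl_ hA) mulNl !(mulC_ hA _ e).
Qed.

(* By commutativity, a left approximate identity is an approximate identity. *)
Lemma approx_identity_left (J : Type) (le : J -> J -> Prop) (e : J -> A) :
  (forall z, net_lim le (fun j => mul (e j) z) z) -> approx_identity mul le e.
Proof.
move=> hl z; split=> // eps heps.
have [j0 hj0] := hl z eps heps.
by exists j0 => j hj; rewrite (mulC_ hA); apply: hj0.
Qed.

Lemma approx_identity_mul (I J : Type) (leI : I -> I -> Prop)
    (leJ : J -> J -> Prop) (e : I -> A) (f : J -> A) :
  directed leI -> approx_identity mul leI e -> norm_bounded e ->
  approx_identity mul leJ f ->
  approx_identity mul (prod_le leI leJ) (fun p => mul (e p.1) (f p.2)).
Proof.
move=> dI he [M hM] hf; apply: approx_identity_left => z eps eps_gt0.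
have [i0] := dir_nonempty dI.
have M1_gt0 : 0 < M + 1 by rewrite ltr_wpDl // (le_trans _ (hM i0)).
have eps2_gt0 : 0 < eps / 2 by rewrite divr_gt0.
have [i1 hi1] := (he z).1 _ eps2_gt0.
have [j1 hj1] := (hf z).1 _ (divr_gt0 eps2_gt0 M1_gt0).
exists (i1, j1) => -[i j] [/= hi hj].
have split_diff : mul (mul (e i) (f j)) z - z =
    mul (e i) (mul (f j) z - z) + (mul (e i) z - z).
  by rewrite mulBr (mulA_ hA) addrA subrK.
rewrite split_diff (splitr eps); apply: le_lt_trans (ler_normD _ _) _.
apply: ltrD; last exact: hi1.
apply: le_lt_trans (normM_ hA _ _) _.
apply: (@le_lt_trans _ _ ((M + 1) * `|mul (f j) z - z|)).
  by rewrite ler_wpM2r // (le_trans (hM i)) // lerDl.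
by rewrite mulrC -ltr_pdivlMr //; apply: hj1.
Qed.

Lemma norm_bounded_mul (I J : Type) (e : I -> A) (f : J -> A) :
  norm_bounded e -> norm_bounded f ->
  norm_bounded (fun p : I * J => mul (e p.1) (f p.2)).
Proof.
move=> [M hM] [N hN]; exists (M * N) => p.
by apply: le_trans (normM_ hA _ _) _; rewrite ler_pM.
Qed.

(* A factor of a boundedly approximately invertible product is boundedly
   approximately invertible: x (y r_j) = (x y) r_j. *)
Lemma bai_mull {x y : A} :
  bdd_approx_invertible mul (mul x y) -> bdd_approx_invertible mul x.
Proof.
move=> [J [le [r hr]]]; exists J, le, (fun j => mul y (r j)).
by under eq_fun do rewrite (mulA_ hA).
Qed.

Lemma bai_mulr {x y : A} :
  bdd_approx_invertible mul (mul x y) -> bdd_approx_invertible mul y.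
Proof. by rewrite (mulC_ hA); apply: bai_mull. Qed.

Lemma bai_mul {x y : A} :
  bdd_approx_invertible mul x -> bdd_approx_invertible mul y ->
  bdd_approx_invertible mul (mul x y).
Proof.
move=> [I [leI [r [dI [he hbe]]]]] [J [leJ [s [dJ [hf hbf]]]]].
exists (I * J)%type, (prod_le leI leJ), (fun p => mul (r p.1) (s p.2)).
have regroup p : mul (mul x y) (mul (r p.1) (s p.2)) =
    mul (mul x (r p.1)) (mul y (s p.2)).
  by rewrite !(mulA_ hA); congr (mul _ _); rewrite -!(mulA_ hA) (mulC_ hA y).
rewrite (funext regroup); split; first exact: directed_prod.
split; [exact: approx_identity_mul dI he hbe hf | exact: norm_bounded_mul hbe hbf].
Qed.

End AbelianNormedAlgebra.

Theorem proposition2p19 (K : numFieldType) (A : normedModType K)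
    (mul : A -> A -> A) (hA : abelian_normed_algebra mul)
    (n : nat) (x : nat -> A) :
  bdd_approx_invertible mul (prod_upto mul x n) <->
  (forall k : nat, (k <= n)%N -> bdd_approx_invertible mul (x k)).
Proof.
elim: n => [|n IH] /=.
  by split=> [h k | h]; [rewrite leqn0 => /eqP -> | exact: h].
split=> [h k | h].
- rewrite leq_eqVlt ltnS => /orP [/eqP -> | hk]; first exact: (bai_mulr hA h).
  exact: (IH.1 (bai_mull hA h)).
- apply: (bai_mul hA); last exact: h.
  by apply: IH.2 => k hk; apply: h; rewrite leqW.
Qed.
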